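(* Let $G$ be a primitive 4-point graph in $\phi^4$. (a) Let $i_1,\dots,i_{j+1}$ be distinct edges of $G$ ($j\ge5$) such that $D^j_G(i_1,\dots,i_j)$ and $D^{j+1}_G(i_1,\dots,i_{j+1})$ are defined and nonzero. If $D^j_G(i_1,\dots,i_j)$ is a signed sum of products of pairs of spanning forest polynomials of $G\setminus\{i_1,\dots,i_j\}$ with $c$ colours, and $D^{j+1}_G(i_1,\dots,i_{j+1})$ is a signed sum of products of pairs of spanning forest polynomials of $G\setminus\{i_1,\dots,i_{j+1}\}$ with $c'$ colours (both graphs on the vertex set $V(G)$), then $c'=c+1$. (b) If a vertex $v$ is isolated in $G\setminus\{i_1,\dots,i_k\}$, and $D^k_G(i_1,\dots,i_k)\ne0$ is a signed sum of products of pairs of spanning forest polynomials of $G\setminus\{i_1,\dots,i_k\}$ with $c$ colours, then the same polynomial is a signed sum of products of pairs of spanning forest polynomials of the graph $(G\setminus\{i_1,\dots,i_k\})-v$ with $c-2$ colours.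
   Context: A 4-point graph in $\phi^4$ is a connected graph $G$ obtained from a connected 4-regular graph by removing one vertex; it is primitive if every proper subgraph $\gamma$ with at least one edge satisfies $|E(\gamma)|>2\ell(\gamma)$, $\ell$ the first Betti number. Each edge $e$ carries a variable $a_e$. For a graph $H$ and a partition $P$ of a subset of $V(H)$, $\mathcal F_{P,H}$ is the set of acyclic subgraphs $F$ with $V(F)=V(H)$, whose number of connected components equals the number of parts of $P$, such that each part of $P$ lies in one component containing no other vertices of $P$; the spanning forest polynomial is $\Phi^P_H=\sum_{F\in\mathcal F_{P,H}}\prod_{e\notin F}a_e$. The number of colours of a product $\Phi^{P_1}_H\cdots\Phi^{P_k}_H$ is $|P_1|+\dots+|P_k|$ ($|P|$ = number of parts). ''A signed sum of products of pairs of spanning forest polynomials of $H$ with $c$ colours'' means an expression $\sum_t\pm\Phi^{P_t}_H\Phi^{P'_t}_H$ with every term nonzero and $|P_t|+|P'_t|=c$ for all $t$. Dodgson polynomials: with $M=\begin{bmatrix}\Lambda & \widetilde E^T\\ -\widetilde E & 0\end{bmatrix}$ ($\Lambda$ diagonal matrix of edge variables, $\widetilde E$ an incidence matrix of an orientation with one row removed), $\Psi^{I,J}_{G,K}=\det M(I,J)|_{a_e=0,e\in K}$ where $M(I,J)$ removes rows indexed by edge set $I$ and columns by $J$, $|I|=|J|$. 5-invariant: ${}^5\Psi_G(i,j,k,l,m)=\pm(\Psi^{ij,kl}_{G,m}\Psi^{ikm,jlm}_G-\Psi^{ik,jl}_{G,m}\Psi^{ijm,klm}_G)$. Denominator reduction: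 $D^5_G(i_1,\dots,i_5)={}^5\Psi_G(i_1,\dots,i_5)$; if $D^n_G(i_1,\dots,i_n)=(Aa_\ell+B)(Ca_\ell+D)$ with $A,B,C,D$ not involving $a_\ell$ then $D^{n+1}_G(i_1,\dots,i_n,\ell)=\pm(AD-BC)$. *)

From HB Require Import structures.
From mathcomp Require Import all_boot all_order all_algebra.
Set Implicit Arguments. Unset Strict Implicit. Unset Printing Implicit Defensive.
Import GRing.Theory Num.Theory.
Local Open Scope ring_scope.

(* A finite multigraph: vertex type V, edge type E, each edge e oriented
   from (ends e).1 to (ends e).2 (self-loops allowed). A "graph" H in the
   statements is a pair (W, S): vertex set W, edge set S (edges with ends in W). *)

Section Graphs.
Variables (V E : finType) (ends : E -> V * V).

Definition adj (F : {set E}) : rel V :=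
  fun x y => [exists e in F, (ends e == (x, y)) || (ends e == (y, x))].

Definition comp (W : {set V}) (F : {set E}) (x : V) : {set V} :=
  [set y in W | connect (adj F) x y].

Definition ncomp (W : {set V}) (F : {set E}) : nat :=
  #|[set comp W F x | x in W]|.

(* acyclic: no edge lies on a cycle, i.e. every edge of F is a bridge of F
   (loops and parallel edges are cycles) *)
Definition acyclic (F : {set E}) : bool :=
  [forall e in F, ~~ connect (adj (F :\ e)) (ends e).1 (ends e).2].

Definition is_part (W : {set V}) (P : {set {set V}}) : bool :=
  [forall p in P, (p != set0) && (p \subset W)] &&
  [forall p in P, forall q in P, (p != q) ==> [disjoint p & q]].

Definition sf_forest (W : {set V}) (S : {set E}) (P : {set {set V}})
    (F : {set E}) : bool :=
  [&& F \subset S, acyclic F, ncomp W F == #|P|,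
      [forall p in P, forall x in p, forall y in p, connect (adj F) x y] &
      [forall p in P, forall q in P, (p != q) ==>
          [forall x in p, forall y in q, ~~ connect (adj F) x y]]].

(* polynomials in the edge variables a_e with integer coefficients are
   represented by their (injective) evaluation maps (E -> int) -> int *)
Definition polyf := (E -> int) -> int.

Definition zerop : polyf := fun _ => 0.

Inductive polyfun : polyf -> Prop :=
| pf_const (c : int) : polyfun (fun _ => c)
| pf_var (e : E) : polyfun (fun a => a e)
| pf_add f g : polyfun f -> polyfun g -> polyfun (fun a => f a + g a)
| pf_mul f g : polyfun f -> polyfun g -> polyfun (fun a => f a * g a).

Definition indep (l : E) (f : polyf) : Prop :=
  forall (a : E -> int) (x : int), f (fun e => if e == l then x else a e) = f a.

Definition Phi (W : {set V}) (S : {set E}) (P : {set {set V}}) : polyf :=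
  fun a => \sum_(F : {set E} | sf_forest W S P F) \prod_(e in S :\: F) a e.

Definition signed_sum (W : {set V}) (S : {set E}) (c : nat) (Q : polyf) : Prop :=
  exists t : seq (bool * {set {set V}} * {set {set V}}),
    (forall x, x \in t ->
       [/\ is_part W x.1.2, is_part W x.2, (#|x.1.2| + #|x.2|)%N = c &
           (fun a => Phi W S x.1.2 a * Phi W S x.2 a) <> zerop]) /\
    Q = (fun a => \sum_(x <- t) (-1) ^+ x.1.1 * (Phi W S x.1.2 a * Phi W S x.2 a)).

Definition isolated (S : {set E}) (v : V) : bool :=
  [forall e in S, ((ends e).1 != v) && ((ends e).2 != v)].

(* r : the vertex whose row is removed from the incidence matrix *)
Variable r : V.

Definition idx := (E + {x : V | x != r})%type.

Definition inc (v : V) (e : E) : int :=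
  (v == (ends e).1)%:Z - (v == (ends e).2)%:Z.

(* M = [[Lambda, Et^T], [-Et, 0]] *)
Definition Mentry (a : E -> int) (x y : idx) : int :=
  match x, y with
  | inl e, inl f => if e == f then a e else 0
  | inl e, inr w => inc (val w) e
  | inr w, inl e => - inc (val w) e
  | inr _, inr _ => 0
  end.

(* Psi^{I,J}_K = det M(I,J) with a_e = 0 for e in K; the remaining rows and
   columns are taken in the canonical enumeration order (sign convention) *)
Definition Dodgson (I J K : {set E}) : polyf := fun a =>
  let a' := fun e => if e \in K then 0 else a e in
  let R := [set x : idx | if x is inl e then e \notin I else true] in
  let C := [set x : idx | if x is inl e then e \notin J else true] in
  \det (\matrix_(i < #|R|, j < #|R|)
          Mentry a' (enum_val i) (nth (enum_val i) (enum C) j)).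

Definition five_inv (i j k l m : E) : polyf := fun a =>
  Dodgson [set i; j] [set k; l] [set m] a * Dodgson [set i; k; m] [set j; l; m] set0 a
  - Dodgson [set i; k] [set j; l] [set m] a * Dodgson [set i; j; m] [set k; l; m] set0 a.

(* DR s Q : Q is (a value, determined up to sign, of) D^n_G(s) *)
Inductive DR : seq E -> polyf -> Prop :=
| DR5 (i j k l m : E) (Q : polyf) :
    uniq [:: i; j; k; l; m] ->
    (Q = five_inv i j k l m \/ Q = (fun a => - five_inv i j k l m a)) ->
    DR [:: i; j; k; l; m] Q
| DRS (s : seq E) (l : E) (P A B C D Q : polyf) :
    DR s P -> l \notin s ->
    polyfun A -> polyfun B -> polyfun C -> polyfun D ->
    indep l A -> indep l B -> indep l C -> indep l D ->
    (forall a, P a = (A a * a l + B a) * (C a * a l + D a)) ->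
    (Q = (fun a => A a * D a - B a * C a) \/ Q = (fun a => - (A a * D a - B a * C a))) ->
    DR (rcons s l) Q.

End Graphs.

Definition degree (V E : finType) (ends : E -> V * V) (v : V) : nat :=
  (#|[set e | (ends e).1 == v]| + #|[set e | (ends e).2 == v]|)%N.

(* G is connected and obtained from a connected 4-regular graph by
   removing one vertex (the vertex None below) *)
Definition four_point (V E : finType) (ends : E -> V * V) : Prop :=
  ncomp ends setT setT = 1%N /\
  exists (E' : finType) (ext : E' -> option V * option V),
    (forall e', ((ext e').1 == None) || ((ext e').2 == None)) /\
    let big := fun x : (E + E')%type =>
      match x with
      | inl e => (Some (ends e).1, Some (ends e).2)
      | inr e' => ext e'
      end in
    (forall w, degree big w = 4%N) /\ ncomp big setT setT = 1%N.

(* first Betti number of the subgraph with edge set F: |F| - |V| + #comp *)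
Definition loops (V E : finType) (ends : E -> V * V) (F : {set E}) : int :=
  #|F|%:Z - #|V|%:Z + (ncomp ends setT F)%:Z.

Definition primitive (V E : finType) (ends : E -> V * V) : Prop :=
  forall F : {set E}, F \proper setT -> F != set0 ->
    2 * loops ends F < #|F|%:Z.

Definition primitive_4pt (V E : finType) (ends : E -> V * V) : Prop :=
  four_point ends /\ primitive ends.

From Pilot Require Import Defs.
From HB Require Import structures.
From mathcomp Require Import all_boot all_order all_algebra.
From mathcomp Require Import ring zify.
From Stdlib Require Import FunctionalExtensionality Classical.
Set Implicit Arguments. Unset Strict Implicit. Unset Printing Implicit Defensive.
Import GRing.Theory Num.Theory.


(* Part (a) is a degree count.  Scaling every edge variable by t multiplies
   - a Dodgson polynomial Psi^{I,J}_K by t^(|E| - |I| - (|V| - 1)),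
   - hence D^n_G(i_1, ..., i_n) by t^(2 (|E| - |V| + 1) - n), because each
     denominator-reduction step (A a_l + B)(C a_l + D) |-> A D - B C lowers the
     degree by exactly one (the discriminant (A D - B C)^2 is determined by the
     product, and the sign is fixed by a polynomial-in-t argument),
   - a spanning forest polynomial Phi^P_(V,S) by t^(|S| - |V| + |P|), since every
     forest in F_{P,(V,S)} has |V| - |P| edges,
   - so a signed sum of pairs with c colours by t^(2 (|S| - |V|) + c).
   A nonzero function has a unique degree, so with |S| = |E| - n the number of
   colours of D^n_G is forced to be n + 2; part (a) follows at once.
   Part (b): an isolated vertex v is its own component in every forest, so every
   nonzero Phi^P has {v} as a part; deleting v and this part from both
   partitions of each term preserves the polynomials and removes two colours. *)

Section Homogeneity.
Local Open Scope ring_scope.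
Variable E : finType.
Implicit Types (f g : polyf E) (p q : nat).

(* [homog f p q]: f(t a) = t^(q - p) f(a) for every nonzero integer t, i.e. f is
   homogeneous of degree q - p; two natural exponents avoid negative degrees. *)
Definition homog f p q : Prop :=
  forall (t : int) (a : E -> int), t != 0 ->
    t ^+ p * f (fun e => t * a e) = t ^+ q * f a.

Lemma homog_mul f g p q p' q' :
  homog f p q -> homog g p' q' -> homog (fun a => f a * g a) (p + p') (q + q').
Proof. by move=> hf hg t a t0; rewrite !exprD mulrACA hf // hg // mulrACA. Qed.

Lemma homog_scale f p q (k : int) : homog f p q -> homog (fun a => k * f a) p q.
Proof. by move=> hf t a t0; rewrite mulrCA hf // mulrCA. Qed.

Lemma homog_opp f p q : homog f p q -> homog (fun a => - f a) p q.
Proof. by move=> hf t a t0; rewrite !mulrN hf. Qed.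

Lemma homog_sub f g p q : homog f p q -> homog g p q -> homog (fun a => f a - g a) p q.
Proof. by move=> hf hg t a t0; rewrite !mulrBr hf // hg. Qed.

Lemma homog_sum (T : eqType) (s : seq T) (F : T -> polyf E) p q :
  (forall x, x \in s -> homog (F x) p q) ->
  homog (fun a => \sum_(x <- s) F x a) p q.
Proof.
move=> hF t a t0; rewrite !mulr_sumr big_seq [RHS]big_seq.
by apply: eq_bigr => x /hF ->.
Qed.

Lemma homog_shift f p q p' q' :
  homog f p q -> (p + q' = p' + q)%N -> homog f p' q'.
Proof.
move=> hf e t a t0; apply: (mulfI (expf_neq0 p t0)).
rewrite !mulrA -!exprD (addnC p p') exprD -mulrA hf // mulrA -exprD.
by rewrite e addnC.
Qed.

Lemma nonzero_witness f : f <> @zerop E -> exists a, f a != 0.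
Proof.
move=> nz; apply: NNPP => none; apply: nz.
apply: functional_extensionality => a; apply/eqP/negPn/negP => fa.
by apply: none; exists a.
Qed.

Lemma homog_degree_unique f p q p' q' :
  f <> @zerop E -> homog f p q -> homog f p' q' -> (p + q' = p' + q)%N.
Proof.
move=> /nonzero_witness [a fa] h h'.
have := h 2 a isT; have := h' 2 a isT => e' e.
have : 2 ^+ (p' + q) * f a = 2 ^+ (p + q') * f a :> int.
  by rewrite !exprD -!mulrA -e -e' !mulrA -!exprD addnC.
move/(mulIf fa)/eqP; rewrite -!natrX eqr_nat eqn_exp2l //.
by move/eqP->.
Qed.
End Homogeneity.

Section RayPolynomials.
Local Open Scope ring_scope.
Variable E : finType.
Implicit Types (f g : polyf E).

Definition ray_poly f : Prop :=
  forall a : E -> int, exists g : {poly int}, forall t, f (fun e => t * a e) = g.[t].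

Lemma ray_poly_polyfun f : polyfun f -> ray_poly f.
Proof.
elim=> [c|e|f1 g1 _ h1 _ h2|f1 g1 _ h1 _ h2] a.
- by exists c%:P => t; rewrite hornerC.
- by exists ((a e)%:P * 'X) => t; rewrite hornerMX hornerC mulrC.
- have [p1 e1] := h1 a; have [p2 e2] := h2 a.
  by exists (p1 + p2) => t; rewrite hornerD e1 e2.
- have [p1 e1] := h1 a; have [p2 e2] := h2 a.
  by exists (p1 * p2) => t; rewrite hornerM e1 e2.
Qed.

Lemma ray_poly_det2 f1 f2 g1 g2 :
  ray_poly f1 -> ray_poly f2 -> ray_poly g1 -> ray_poly g2 ->
  ray_poly (fun a => f1 a * f2 a - g1 a * g2 a).
Proof.
move=> h1 h2 h3 h4 a.
have [p1 e1] := h1 a; have [p2 e2] := h2 a; have [p3 e3] := h3 a; have [p4 e4] := h4 a.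
by exists (p1 * p2 - p3 * p4) => t; rewrite hornerD hornerN !hornerM e1 e2 e3 e4.
Qed.

Lemma poly_eq0_nonzero_roots (g : {poly int}) :
  (forall t : int, t != 0 -> g.[t] = 0) -> g = 0.
Proof.
move=> g0; apply: (@roots_geq_poly_eq0 _ g [seq i.+1%:Z | i <- iota 0 (size g)]).
- by apply/allP => x /mapP [i _ ->]; apply/rootP; apply: g0.
- by rewrite map_inj_uniq ?iota_uniq // => i j [].
- by rewrite size_map size_iota.
Qed.

(* If the square of a ray-polynomial function scales homogeneously, so does the
   function itself: on each ray, t^p f(t a) -+ t^q f(a) is a product of two
   polynomials vanishing at all t != 0, and the sign is fixed by t = 1. *)
Lemma homog_of_sqr f p q :
  ray_poly f ->
  (forall t a, t != 0 -> (t ^+ p * f (fun e => t * a e)) ^+ 2 = (t ^+ q * f a) ^+ 2) ->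
  homog f p q.
Proof.
move=> rf sq t a t0; have [g eg] := rf a.
have f1 : f a = g.[1].
  by rewrite -eg; congr f; apply: functional_extensionality => e; rewrite mul1r.
set U := 'X^p * g - 'X^q * (f a)%:P; set W := 'X^p * g + 'X^q * (f a)%:P.
have UW0 : U * W = 0.
  apply: poly_eq0_nonzero_roots => s s0.
  rewrite hornerM /U /W !(hornerD, hornerN, hornerM, hornerXn, hornerC) -eg.
  by apply/eqP; rewrite -subr_sqr subr_eq0 sq.
have U0 : U = 0.
  have [fa0|fa0] := eqVneq (f a) 0.
    by move: UW0; rewrite /U /W fa0 mulr0 subr0 addr0 => /eqP; rewrite mulf_eq0 orbb => /eqP.
  move/eqP: UW0; rewrite mulf_eq0 => /orP [/eqP //|/eqP W0].
  have : W.[1] = 0 by rewrite W0 horner0.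
  rewrite /W hornerD !hornerM !hornerXn hornerC !expr1n !mul1r -f1 => /eqP.
  by rewrite -mulr2n mulrn_eq0 (negbTE fa0).
have : U.[t] = 0 by rewrite U0 horner0.
by rewrite /U hornerD hornerN !hornerM !hornerXn hornerC -eg => /eqP; rewrite subr_eq0 => /eqP.
Qed.
End RayPolynomials.

Section ReductionStep.
Local Open Scope ring_scope.

(* The discriminant (a d - b c)^2 = (a d + b c)^2 - 4 (a c)(b d) of a product of
   two linear polynomials is determined by the product: comparing
   T (a' t x + b')(c' t x + d') with S (a x + b)(c x + d) at x = 0, 1, -1. *)
Lemma discriminant_scaling (T S t a' b' c' d' a b c d : int) :
  (forall x, T * ((a' * (t * x) + b') * (c' * (t * x) + d'))
             = S * ((a * x + b) * (c * x + d))) ->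
  (T * t * (a' * d' - b' * c')) ^+ 2 = (S * (a * d - b * c)) ^+ 2.
Proof.
move=> eq_at; have e0 := eq_at 0; have e1 := eq_at 1; have em := eq_at (-1).
have mid : T * t * (a' * d' + b' * c') = S * (a * d + b * c).
  apply: (@mulfI _ 2) => //.
  have -> : 2 * (T * t * (a' * d' + b' * c')) =
    T * ((a' * (t * 1) + b') * (c' * (t * 1) + d')) -
    T * ((a' * (t * -1) + b') * (c' * (t * -1) + d')) by ring.
  by rewrite e1 em; ring.
have lead : T * t * t * (a' * c') = S * (a * c).
  apply: (@mulfI _ 2) => //.
  have -> : 2 * (T * t * t * (a' * c')) =
    T * ((a' * (t * 1) + b') * (c' * (t * 1) + d')) +
    T * ((a' * (t * -1) + b') * (c' * (t * -1) + d'))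
    - 2 * (T * ((a' * (t * 0) + b') * (c' * (t * 0) + d'))) by ring.
  by rewrite e1 em e0; ring.
have const : T * (b' * d') = S * (b * d).
  by move: e0; rewrite !mulr0 !add0r.
have -> : (T * t * (a' * d' - b' * c')) ^+ 2 =
  (T * t * (a' * d' + b' * c')) ^+ 2 - 4 * (T * t * t * (a' * c')) * (T * (b' * d')) by ring.
by rewrite mid lead const; ring.
Qed.

Lemma reduction_homog (E : finType) (l : E) (P A B C D : polyf E) p q :
  polyfun A -> polyfun B -> polyfun C -> polyfun D ->
  indep l A -> indep l B -> indep l C -> indep l D ->
  homog P p q ->
  (forall a, P a = (A a * a l + B a) * (C a * a l + D a)) ->
  homog (fun a => A a * D a - B a * C a) p.+1 q.
Proof.
move=> pA pB pC pD iA iB iC iD hP eP.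
apply: homog_of_sqr; first by apply: ray_poly_det2; apply: ray_poly_polyfun.
move=> t a t0; rewrite [t ^+ p.+1]exprSr.
apply: discriminant_scaling => x.
pose ax := fun e => if e == l then x else a e.
have scaled : (fun e => t * ax e) = (fun e => if e == l then t * x else t * a e).
  by apply: functional_extensionality => e; rewrite /ax; case: (e == l).
have := hP t ax t0; rewrite !eP scaled /ax eqxx.
by rewrite (iA _ (t * x)) (iB _ (t * x)) (iC _ (t * x)) (iD _ (t * x)) iA iB iC iD.
Qed.
End ReductionStep.

Section DodgsonHomogeneity.
Local Open Scope ring_scope.
Variables (V E : finType) (ends : E -> V * V) (r : V).
Local Notation idx := (idx E r).

Definition is_vertex_idx (x : idx) : bool := if x is inr _ then true else false.

Definition idx_weight (t : int) (x : idx) : int := if x is inl _ then 1 else t.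

Definition nvert : nat := #|[set x : idx | is_vertex_idx x]|.

Lemma nvert_succ : nvert.+1 = #|V|.
Proof.
rewrite /nvert; have -> : [set x : idx | is_vertex_idx x] = inr @: [set: {x : V | x != r}].
  apply/setP => -[e|w]; rewrite !inE /=; last by rewrite imset_f.
  by apply/esym/imsetP => -[].
rewrite card_imset ?cardsT ?card_sig ?cardC1; last by move=> ? ? [].
by rewrite prednK //; apply/card_gt0P; exists r.
Qed.

Definition kept (I : {set E}) : {set idx} :=
  [set x : idx | if x is inl e then e \notin I else true].

(* Scaling every edge variable by t and then multiplying the vertex rows and
   columns by t multiplies the whole matrix by t. *)
Lemma det_Mentry_scale n (rw cl : 'I_n -> idx) (b : E -> int) (t : int) :
  \det (\matrix_(i, j) Mentry ends (fun e => t * b e) (rw i) (cl j))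
   * (\prod_i idx_weight t (rw i)) * (\prod_j idx_weight t (cl j))
  = t ^+ n * \det (\matrix_(i, j) Mentry ends b (rw i) (cl j)).
Proof.
rewrite -detZ.
have -> : t *: (\matrix_(i, j) Mentry ends b (rw i) (cl j)) =
  diag_mx (\row_i idx_weight t (rw i))
  *m (\matrix_(i, j) Mentry ends (fun e => t * b e) (rw i) (cl j))
  *m diag_mx (\row_j idx_weight t (cl j)).
  apply/matrixP => i j; rewrite mul_mx_diag mul_diag_mx !mxE.
  case: (rw i) => [e|w]; case: (cl j) => [f|w'] /=; rewrite ?mul1r ?mulr1.
  - by case: (e == f); rewrite ?mulr0.
  - by rewrite mulrC.
  - by [].
  - by rewrite !mulr0 mul0r.
rewrite !det_mulmx !det_diag.
under [in RHS]eq_bigr do rewrite mxE.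
under [X in _ = _ * _ * X]eq_bigr do rewrite mxE.
ring.
Qed.

Lemma prod_idx_weight (A : {set idx}) t :
  [set x : idx | is_vertex_idx x] \subset A -> \prod_(x in A) idx_weight t x = t ^+ nvert.
Proof.
move=> sub.
rewrite (bigID is_vertex_idx) /= [X in _ * X]big1; last by case=> [e|w] //=; rewrite andbF.
rewrite mulr1 (eq_bigr (fun _ => t)); last by case=> [e|w] //=; rewrite andbF.
rewrite prodr_const /nvert; congr (_ ^+ _); apply: eq_card => x.
rewrite [in RHS]inE unfold_in /=; case vx: (is_vertex_idx x); rewrite ?andbF ?andbT //.
by apply: (subsetP sub); rewrite inE.
Qed.

Lemma card_kept (I : {set E}) : (#|kept I| + #|I| = nvert + #|E|)%N.
Proof.
have -> : kept I = [set x : idx | is_vertex_idx x] :|: (inl @: (~: I)).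
  apply/setP => -[e|w]; rewrite !inE //=.
  apply/idP/imsetP => [eI|[f fI [->]]]; last by rewrite inE in fI.
  by exists e; rewrite ?inE.
rewrite cardsU.
have -> : [set x : idx | is_vertex_idx x] :&: (inl @: (~: I)) = set0.
  by apply/setP => -[e|w]; rewrite !inE //=; apply/negbTE/imsetP => -[f _].
rewrite cards0 subn0 card_imset; last by move=> ? ? [].
by rewrite -addnA [(#|~: I| + _)%N]addnC cardsC.
Qed.

(* Psi^{I,J}_K is homogeneous of degree |E| - |I| - (|V| - 1): |E| - |I| edge
   rows minus |V| - 1 rescaled vertex rows (see det_Mentry_scale). *)
Lemma dodgson_homog (I J K : {set E}) n :
  #|I| = n -> #|J| = n -> homog (Dodgson ends r I J K) (nvert + nvert + n) (nvert + #|E|).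
Proof.
move=> cI cJ; apply: (@homog_shift _ _ (nvert + nvert) #|kept I|); last first.
  by have := card_kept I; rewrite cI; lia.
move=> t a t0; rewrite /Dodgson /= -/(kept I) -/(kept J).
set a' := fun e => if e \in K then 0 else a e.
have -> : (fun e => if e \in K then 0 else t * a e) = (fun e => t * a' e).
  by apply: functional_extensionality => e; rewrite /a'; case: (e \in K); rewrite ?mulr0.
have size_cols : #|kept I| = size (enum (kept J)).
  rewrite -cardE; apply/eqP; rewrite -(eqn_add2r n) -{1}cI -{1}cJ; apply/eqP.
  by rewrite !card_kept.
have col_default b : \matrix_(i < #|kept I|, j < #|kept I|)
    Mentry ends b (enum_val i) (nth (enum_val i) (enum (kept J)) j)
  = \matrix_(i, j) Mentry ends b (enum_val i) (nth (enum_val j) (enum (kept J)) j).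
  by apply/matrixP => i j; rewrite !mxE (set_nth_default (enum_val j)) // -size_cols.
rewrite !col_default -(det_Mentry_scale _ _ a') exprD.
have -> : \prod_(i < #|kept I|) idx_weight t (enum_val i) = t ^+ nvert.
  by rewrite -big_enum_val prod_idx_weight //; apply/subsetP => x; rewrite !inE; case: x.
have -> : \prod_(j < #|kept I|) idx_weight t (nth (enum_val j) (enum (kept J)) j)
          = t ^+ nvert.
  rewrite -(@prod_idx_weight (kept J) t); last by apply/subsetP => x; rewrite !inE; case: x.
  rewrite -[in RHS]big_enum /=.
  case: (enum (kept J)) size_cols => [|x0 s] size_cols'.
    by rewrite big_nil big1 // => j; have := ltn_ord j; rewrite {2}size_cols'.
  rewrite (big_nth x0) big_mkord -size_cols'.
  by apply: eq_bigr => j _; rewrite (set_nth_default x0) // -size_cols'.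
ring.
Qed.

Lemma cards3 (i k m : E) : i != k -> i != m -> k != m -> #|[set i; k; m]| = 3.
Proof.
move=> ik im km; rewrite -setUA cardsU1 cards2 km !inE.
by rewrite (negbTE ik) (negbTE im).
Qed.

Lemma five_inv_homog (i j k l m : E) : uniq [:: i; j; k; l; m] ->
  homog (five_inv ends r i j k l m)
    (nvert + nvert + 2 + (nvert + nvert + 3)) (nvert + #|E| + (nvert + #|E|)).
Proof.
rewrite /= !inE !negb_or => /and5P [/and4P [ij ik il im] /and3P [jk jl jm] /andP [kl km] lm _].
by apply: homog_sub; apply: homog_mul; apply: dodgson_homog;
   rewrite ?cards2 ?cards3 // ?ij ?kl ?ik ?jl.
Qed.

(* D^n_G(i_1, ..., i_n) is homogeneous of degree 2 (|E| - |V| + 1) - n: the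
   5-invariant has degree 2 (|E| - |V| + 1) - 5 and each reduction step lowers
   the degree by one. *)
Lemma DR_homog (s : seq E) (P : polyf E) : DR ends r s P ->
  exists p q, homog P p q /\ (q + size s + (nvert + nvert) = p + (#|E| + #|E|))%N.
Proof.
elim=> {s P} [i j k l m Q dist eQ
            |s l P A B C D Q _ [p [q [hP deg]]] _ pA pB pC pD iA iB iC iD eP eQ].
- exists (nvert + nvert + 2 + (nvert + nvert + 3))%N, (nvert + #|E| + (nvert + #|E|))%N.
  split; last by rewrite /=; lia.
  by case: eQ => ->; [|apply: homog_opp]; apply: five_inv_homog.
- exists p.+1, q; split; last by rewrite size_rcons; lia.
  have hQ := reduction_homog pA pB pC pD iA iB iC iD hP eP.
  by case: eQ => ->; [|apply: homog_opp].
Qed.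
End DodgsonHomogeneity.

Section Forests.
Variables (V E : finType) (ends : E -> V * V).
Implicit Types (F : {set E}) (x y : V).
Local Notation adj := (adj ends).

Lemma adj_sym F : symmetric (adj F).
Proof. by move=> x y; apply/existsP/existsP => -[f Hf]; exists f; rewrite orbC. Qed.

Lemma adj_connect_sym F : connect_sym (adj F).
Proof. exact: sym_connect_sym (adj_sym F). Qed.

Lemma connect_subset F F' x y :
  F \subset F' -> connect (adj F) x y -> connect (adj F') x y.
Proof.
move=> sub; apply: connect_sub => {}x {}y /existsP [f /andP [fF H]].
by apply: connect1; apply/existsP; exists f; rewrite (subsetP sub).
Qed.

Lemma connect_from_isolated F x y :
  (forall z, ~~ adj F x z) -> connect (adj F) x y -> y = x.
Proof. by move=> none /connectP [[|z p]] /=; [move=> _ -> | rewrite (negbTE (none z))]. Qed.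

Definition ccomp F x := [set y | connect (adj F) x y].

Definition reach F (X : {set V}) := [set y | [exists x in X, connect (adj F) x y]].

Lemma reach_ccomp F (X : {set V}) x :
  x \in X -> {in X, forall z, connect (adj F) x z} -> reach F X = ccomp F x.
Proof.
move=> xX xXz; apply/setP => y; rewrite !inE.
apply/existsP/idP => [[z /andP [zX zy]]|xy]; last by exists x; rewrite xX.
exact: connect_trans (xXz z zX) zy.
Qed.

Lemma ncompT F : ncomp ends setT F = #|[set ccomp F x | x in setT]|.
Proof.
by rewrite /ncomp (@eq_imset _ _ _ (ccomp F)) // => x; apply/setP => y; rewrite !inE.
Qed.

Lemma ccomp_eq F x y : (ccomp F x == ccomp F y) = connect (adj F) x y.
Proof.
apply/eqP/idP => [exy|cxy].
  have : y \in ccomp F y by rewrite inE connect0.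
  by rewrite -exy inE.
by apply/setP => z; rewrite !inE (same_connect (adj_connect_sym F) cxy).
Qed.

Lemma ncomp_empty : ncomp ends setT set0 = #|V|.
Proof.
rewrite ncompT.
have -> : [set ccomp set0 x | x in setT] = [set [set x] | x in setT].
  apply: eq_imset => x; apply/setP => y; rewrite !inE.
  apply/idP/eqP => [cxy|->]; last exact: connect0.
  by apply: connect_from_isolated cxy => z; apply/existsP => -[f]; rewrite inE.
by rewrite card_imset ?cardsT //; apply: set1_inj.
Qed.

Lemma acyclic_subset F F' : F' \subset F -> acyclic ends F -> acyclic ends F'.
Proof.
move=> sub /forallP acF; apply/forallP => f; apply/implyP => fF'.
have := acF f; rewrite (subsetP sub) //=; apply: contra.
by apply: connect_subset; apply: setSD.
Qed.

Section Bridge.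
Variables (F : {set E}) (e : E).
Hypothesis eF : e \in F.
Let u := (ends e).1.
Let w := (ends e).2.
Hypothesis bridge : ~~ connect (adj (F :\ e)) u w.

Lemma adj_bridge x z :
  adj F x z = [|| adj (F :\ e) x z, ends e == (x, z) | ends e == (z, x)].
Proof.
apply/existsP/idP => [[f /andP [fF H]]|].
  have [<- | fe] := eqVneq f e; first by rewrite H orbT.
  by apply/orP; left; apply/existsP; exists f; rewrite !inE fe fF.
case/or3P => [/existsP [f /andP [fF H]]|H|H].
- by exists f; rewrite H; move: fF; rewrite !inE => /andP [_ ->].
- by exists e; rewrite eF H.
- by exists e; rewrite eF H orbT.
Qed.

Lemma connect_bridge x y : connect (adj F) x y ->
  [|| connect (adj (F :\ e)) x y,
      connect (adj (F :\ e)) x u && connect (adj (F :\ e)) w y |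
      connect (adj (F :\ e)) x w && connect (adj (F :\ e)) u y].
Proof.
case/connectP => p; elim: p x => [|z p IH] x /=; first by move=> _ ->; rewrite connect0.
case/andP => axz /IH {}IH /IH Rzy; move: axz; rewrite adj_bridge.
case/or3P => [axz|/eqP exz|/eqP exz].
- have cxz := connect1 axz.
  by case/or3P: Rzy => [c|/andP [c1 c2]|/andP [c1 c2]];
     rewrite ?(connect_trans cxz c) ?(connect_trans cxz c1) ?c2 ?orbT.
- have [-> ez] : x = u /\ z = w by rewrite /u /w exz.
  by rewrite ez in Rzy; case/or3P: Rzy => [c|/andP [c1 c2]|/andP [c1 c2]];
     rewrite ?connect0 ?c ?c2 ?orbT.
- have [-> ez] : x = w /\ z = u by rewrite /u /w exz.
  by rewrite ez in Rzy; case/or3P: Rzy => [c|/andP [c1 c2]|/andP [c1 c2]];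
     rewrite ?connect0 ?c ?c2 ?orbT.
Qed.

(* Deleting a bridge splits one component into two: the F-components are the
   images under [reach F] of the components of F :\ e, where those of u and w
   have the same image. *)
Lemma ncomp_bridge : ncomp ends setT (F :\ e) = (ncomp ends setT F).+1.
Proof.
have lift_ccomp x : reach F (ccomp (F :\ e) x) = ccomp F x.
  apply: reach_ccomp => [|z]; rewrite inE ?connect0 //.
  by apply: connect_subset; apply: subD1set.
have uw : connect (adj F) u w.
  by apply: connect1; rewrite adj_bridge -surjective_pairing eqxx orbT.
rewrite !ncompT; set C' := [set ccomp (F :\ e) x | x in setT].
rewrite (cardsD1 (ccomp (F :\ e) w) C') imset_f // add1n; congr _.+1.
have -> : [set ccomp F x | x in setT] = reach F @: (C' :\ ccomp (F :\ e) w).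
  apply/setP => X; apply/imsetP/imsetP => [[x _ ->]|[Y]]; last first.
    by rewrite !inE => /andP [_ /imsetP [y _ ->]] ->; exists y; rewrite ?lift_ccomp.
  have [xw|nxw] := boolP (connect (adj (F :\ e)) x w).
    exists (ccomp (F :\ e) u); first by rewrite !inE (ccomp_eq _ u w) bridge imset_f.
    rewrite lift_ccomp; apply/eqP; rewrite ccomp_eq adj_connect_sym.
    apply: connect_trans uw _; rewrite adj_connect_sym.
    by apply: connect_subset xw; apply: subD1set.
  by exists (ccomp (F :\ e) x); rewrite ?lift_ccomp // !inE (ccomp_eq _ x w) nxw imset_f.
rewrite card_in_imset // => X Y.
rewrite !inE => /andP [nX /imsetP [x _ eX]] /andP [nY /imsetP [y _ eY]]; subst X Y.
rewrite !lift_ccomp => /eqP; rewrite ccomp_eq => /connect_bridge.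
case/or3P => [xy|/andP [_ wy]|/andP [xw _]]; first by apply/eqP; rewrite ccomp_eq.
- by move: nY; rewrite (ccomp_eq _ y w) adj_connect_sym wy.
- by move: nX; rewrite (ccomp_eq _ x w) xw.
Qed.
End Bridge.

Lemma forest_card F : acyclic ends F -> (#|F| + ncomp ends setT F)%N = #|V|.
Proof.
elim: {F}#|F| {-2}F (erefl #|F|) => [|n IH] F cardF acF.
  by move/eqP: cardF; rewrite cards_eq0 => /eqP ->; rewrite cards0 ncomp_empty.
have [e eF] : exists e, e \in F by apply/set0Pn; rewrite -card_gt0 cardF.
have bridge : ~~ connect (adj (F :\ e)) (ends e).1 (ends e).2.
  by move/forallP: acF => /(_ e); rewrite eF.
move: cardF; rewrite (cardsD1 e F) eF add1n => -[cardFe].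
have := IH (F :\ e) cardFe (acyclic_subset (subD1set F e) acF).
by rewrite ncomp_bridge // addnS.
Qed.
End Forests.

Section SpanningForestDegree.
Local Open Scope ring_scope.
Variables (V E : finType) (ends : E -> V * V).

(* Every forest in F_{P,(V,S)} has |V| - |P| edges, so Phi^P has degree
   |S| - |V| + |P|. *)
Lemma Phi_homog (S : {set E}) (P : {set {set V}}) :
  homog (Phi ends setT S P) #|V| (#|S| + #|P|).
Proof.
move=> t a t0; rewrite /Phi !mulr_sumr; apply: eq_bigr => F.
case/and5P => sub acF /eqP ncF _ _.
rewrite prodrMl mulrA -exprD; congr (_ ^+ _ * _).
have := forest_card acF; rewrite ncF cardsDS //.
have := subset_leq_card sub; lia.
Qed.

Lemma signed_sum_homog (S : {set E}) c (Q : polyf E) :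
  signed_sum ends setT S c Q -> homog Q (#|V| + #|V|) (#|S| + #|S| + c).
Proof.
case=> ts [terms ->]; apply: homog_sum => x /terms [_ _ colours _].
apply: homog_scale; apply: homog_shift (homog_mul (Phi_homog S x.1.2) (Phi_homog S x.2)) _.
lia.
Qed.
End SpanningForestDegree.

Section ForestsAndPartitions.
Variables (V E : finType) (ends : E -> V * V).
Implicit Types (W : {set V}) (S F : {set E}) (P : {set {set V}}) (p q : {set V}).

Lemma part_nonempty W P p : is_part W P -> p \in P -> p != set0.
Proof. by case/andP => /forallP /(_ p) /implyP nonempty _ /nonempty /andP []. Qed.

Lemma part_disjoint W P p q :
  is_part W P -> p \in P -> q \in P -> p != q -> [disjoint p & q].
Proof.
case/andP => _ /forallP /(_ p) /implyP disj pP qP pq.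
by move: (disj pP) => /forallP /(_ q) /implyP /(_ qP) /implyP /(_ pq).
Qed.

Lemma sf_forest_joins W S P F p x y : sf_forest ends W S P F -> p \in P ->
  x \in p -> y \in p -> connect (adj ends F) x y.
Proof.
case/and5P => _ _ _ /forallP /(_ p) + _ pP xp yp; rewrite pP /=.
by move=> /forallP /(_ x); rewrite xp => /forallP /(_ y); rewrite yp.
Qed.

Lemma sf_forest_separates W S P F p q x y : sf_forest ends W S P F ->
  p \in P -> q \in P -> p != q -> x \in p -> y \in q -> ~~ connect (adj ends F) x y.
Proof.
case/and5P => _ _ _ _ /forallP /(_ p) + pP qP pq xp yq; rewrite pP /=.
move=> /forallP /(_ q); rewrite qP pq /= => /forallP /(_ x).
by rewrite xp => /forallP /(_ y); rewrite yq.
Qed.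

Lemma sf_forest_reach S P F p x : sf_forest ends setT S P F -> p \in P -> x \in p ->
  reach ends F p = ccomp ends F x.
Proof.
by move=> sfF pP xp; apply: (reach_ccomp xp) => z; apply: sf_forest_joins sfF pP xp.
Qed.

Lemma part_comp_inj S P F : is_part setT P -> sf_forest ends setT S P F ->
  {in P &, injective (reach ends F)}.
Proof.
move=> partP sfF p q pP qP; apply: contra_eq => pq.
have [x xp] := set0Pn _ (part_nonempty partP pP).
have [y yq] := set0Pn _ (part_nonempty partP qP).
rewrite (sf_forest_reach sfF pP xp) (sf_forest_reach sfF qP yq) (ccomp_eq _ _ x y).
exact: sf_forest_separates sfF pP qP pq xp yq.
Qed.
End ForestsAndPartitions.

Lemma forall_in_setD1 (T : finType) (A : {set T}) (a : T) (Pr : pred T) :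
  a \in A -> Pr a -> [forall x in A, Pr x] = [forall x in A :\ a, Pr x].
Proof.
move=> aA Pa; apply/forall_inP/forall_inP => Pr_A x; first by case/setD1P => _ /Pr_A.
by move=> xA; have [-> //|xa] := eqVneq x a; apply: Pr_A; rewrite !inE xa.
Qed.

Section IsolatedVertex.
Variables (V E : finType) (ends : E -> V * V).
Variables (S : {set E}) (v : V).
Hypothesis iso : isolated ends S v.
Implicit Types (F : {set E}) (P : {set {set V}}) (p q : {set V}).

Lemma isolated_connect F y : F \subset S -> connect (adj ends F) v y -> y = v.
Proof.
move=> sub; apply: connect_from_isolated => z; apply/existsP => -[f /andP [fF H]].
move/forallP: iso => /(_ f); rewrite (subsetP sub) //= => /andP [].
by case/orP: H => /eqP -> /=; rewrite eqxx // => _ /negP.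
Qed.

Lemma isolated_ccomp F : F \subset S -> ccomp ends F v = [set v].
Proof.
move=> sub; apply/setP => y; rewrite !inE.
by apply/idP/eqP => [/(isolated_connect sub)|->]; last exact: connect0.
Qed.

Lemma ncomp_isolated F : F \subset S ->
  ncomp ends setT F = (ncomp ends (setT :\ v) F).+1.
Proof.
move=> sub; have into_v x : connect (adj ends F) x v -> x = v.
  by rewrite adj_connect_sym => /(isolated_connect sub).
rewrite ncompT /ncomp.
have -> : [set ccomp ends F x | x in setT] =
          ccomp ends F v |: [set ccomp ends F x | x in setT :\ v].
  by rewrite -imsetU1 setD1K.
have -> : [set ccomp ends F x | x in setT :\ v] =
          [set Defs.comp ends (setT :\ v) F x | x in setT :\ v].
  apply: eq_in_imset => x; rewrite !inE andbT => xv; apply/setP => y.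
  rewrite !inE andbT; have [-> | //] := eqVneq y v.
  by apply/negbTE; apply: contra xv => /into_v ->.
rewrite cardsU1; suff -> : ccomp ends F v \notin
  [set Defs.comp ends (setT :\ v) F x | x in setT :\ v] by [].
apply/imsetP => -[x]; rewrite !inE andbT => xv /setP /(_ x).
by rewrite !inE xv connect0 => /(isolated_connect sub) exv; rewrite exv eqxx in xv.
Qed.

(* In every spanning forest of F_{P,(V,S)}, the isolated vertex v forms a part
   of its own: otherwise the parts would occupy |P| distinct components other
   than {v}, one more than there are. *)
Lemma isolated_singleton_part P F :
  is_part setT P -> sf_forest ends setT S P F -> [set v] \in P.
Proof.
move=> partP sfF; have sub : F \subset S by case/and5P: sfF.
apply: contraT => notv; set C := [set ccomp ends F x | x in setT].
have le : #|P| <= #|C :\ [set v]|.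
  rewrite -(card_in_imset (part_comp_inj partP sfF)); apply: subset_leq_card.
  apply/subsetP => X /imsetP [p pP ->].
  have [x xp] := set0Pn _ (part_nonempty partP pP).
  rewrite (sf_forest_reach sfF pP xp) !inE imset_f // andbT.
  apply: contraNneq notv => cx.
  have xv : x = v by apply/eqP; rewrite -in_set1 -cx inE connect0.
  suff <- : p = [set v] by [].
  apply/setP => y; rewrite inE; apply/idP/eqP => [yp|->]; last by rewrite -xv.
  by apply: isolated_connect sub _; rewrite -xv; apply: sf_forest_joins sfF pP xp yp.
have vC : [set v] \in C by rewrite -(isolated_ccomp sub) imset_f.
case/and5P: sfF => _ _ /eqP ncF _ _.
by move: le; rewrite -ncF ncompT -/C (cardsD1 [set v] C) vC; lia.
Qed.

Lemma notin_other_part P q : is_part setT P -> q \in P -> [set v] \in P ->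
  q != [set v] -> v \notin q.
Proof.
move=> partP qP vP qv; have := part_disjoint partP qP vP qv.
by apply: contraTN => vq; rewrite -setI_eq0; apply/set0Pn; exists v; rewrite !inE vq eqxx.
Qed.

Lemma is_part_remove P : is_part setT P -> [set v] \in P ->
  is_part (setT :\ v) (P :\ [set v]).
Proof.
move=> partP vP; apply/andP; split; apply/forall_inP => p /setD1P [pv pP].
  rewrite (part_nonempty partP pP) /=; apply/subsetP => y yp; rewrite !inE andbT.
  by apply: contraNneq (notin_other_part partP pP vP pv) => <-.
apply/forall_inP => q /setD1P [_ qP]; apply/implyP; exact: part_disjoint partP pP qP.
Qed.

Lemma sf_forest_remove P F : is_part setT P -> [set v] \in P ->
  sf_forest ends setT S P F = sf_forest ends (setT :\ v) S (P :\ [set v]) F.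
Proof.
move=> partP vP; rewrite /sf_forest; case sub: (F \subset S) => //=.
rewrite (ncomp_isolated sub) (cardsD1 [set v] P) vP eqSS.
have apart p x : p \in P -> p != [set v] -> x \in p -> ~~ connect (adj ends F) v x.
  move=> pP pv xp; apply: contraNN (notin_other_part partP pP vP pv).
  by move=> /(isolated_connect sub) <-.
congr [&& _, _, _ & _].
  apply: forall_in_setD1 => //; apply/forall_inP => x; rewrite inE => /eqP ->.
  by apply/forall_inP => y; rewrite inE => /eqP ->; apply: connect0.
rewrite (forall_in_setD1 vP); last first.
  apply/forall_inP => q qP; apply/implyP => vq; apply/forall_inP => x; rewrite inE => /eqP ->.
  by apply/forall_inP => y; apply: apart; rewrite // eq_sym.
apply: eq_forallb_in => p /setD1P [pv pP]; rewrite (forall_in_setD1 vP) // pv /=.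
apply/forall_inP => x xp; apply/forall_inP => y; rewrite inE => /eqP ->.
by rewrite adj_connect_sym; apply: apart pP pv xp.
Qed.

Lemma Phi_singleton_part P (a : E -> int) :
  is_part setT P -> (Phi ends setT S P a != 0)%R -> [set v] \in P.
Proof.
move=> partP; apply: contraR => notv; rewrite /Phi big_pred0 // => F.
by apply: contraNF notv; apply: isolated_singleton_part partP.
Qed.

Lemma Phi_remove P : is_part setT P -> [set v] \in P ->
  Phi ends setT S P = Phi ends (setT :\ v) S (P :\ [set v]).
Proof.
move=> partP vP; apply: functional_extensionality => a.
by apply: eq_bigl => F; apply: sf_forest_remove.
Qed.

Lemma signed_sum_remove c (Q : polyf E) :
  signed_sum ends setT S c Q -> signed_sum ends (setT :\ v) S (c - 2)%N Q.
Proof.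
case=> ts [terms ->].
have singleton x : x \in ts -> [set v] \in x.1.2 /\ [set v] \in x.2.
  case/terms => part1 part2 _ /nonzero_witness [a]; rewrite mulf_eq0 negb_or.
  by case/andP => /(Phi_singleton_part part1) -> /(Phi_singleton_part part2) ->.
exists [seq (x.1.1, x.1.2 :\ [set v], x.2 :\ [set v]) | x <- ts]; split.
  move=> _ /mapP [x xts ->] /=; have [part1 part2 colours nonzero] := terms x xts.
  have [v1 v2] := singleton x xts.
  rewrite -!Phi_remove //; split; rewrite ?is_part_remove //.
  move: colours; rewrite (cardsD1 [set v] x.1.2) (cardsD1 [set v] x.2) v1 v2 /=.
  by rewrite !add1n addSn addnS subn2 => <-.
apply: functional_extensionality => a; rewrite big_map.
apply: eq_big_seq => x xts /=; have [v1 v2] := singleton x xts.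
by have [part1 part2 _ _] := terms x xts; rewrite -!Phi_remove.
Qed.
End IsolatedVertex.

Section Colours.
Variables (V E : finType) (ends : E -> V * V) (r : V).

(* Comparing degrees of homogeneity: if D^n_G is nonzero and is a signed sum of
   products of pairs of spanning forest polynomials of G minus the n reduced
   edges, then it has exactly n + 2 colours. *)
Lemma reduction_colours (s : seq E) (P : polyf E) c :
  uniq s -> DR ends r s P -> P <> @zerop E ->
  signed_sum ends setT (~: [set x in s]) c P -> c = (size s).+2.
Proof.
move=> uniq_s DRP nzP sumP.
have [p [q [hP degP]]] := DR_homog DRP.
have := homog_degree_unique nzP hP (signed_sum_homog sumP).
have size_s : #|[set x in s]| = size s by rewrite cardsE; apply/card_uniqP.
have := cardsC [set x in s]; have := @nvert_succ V E r; lia.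
Qed.
End Colours.

Theorem mainTheorem8 (V E : finType) (ends : E -> V * V) (r : V) :
  primitive_4pt ends ->
  (forall (s : seq E) (l : E) (P Q : polyf E) (c c' : nat),
     (5 <= size s)%N -> uniq (rcons s l) ->
     DR ends r s P -> DR ends r (rcons s l) Q ->
     P <> (@zerop E) -> Q <> (@zerop E) ->
     signed_sum ends setT (~: [set x in s]) c P ->
     signed_sum ends setT (~: [set x in rcons s l]) c' Q ->
     c' = c.+1) /\
  (forall (s : seq E) (v : V) (P : polyf E) (c : nat),
     uniq s -> DR ends r s P -> P <> (@zerop E) ->
     isolated ends (~: [set x in s]) v ->
     signed_sum ends setT (~: [set x in s]) c P ->
     signed_sum ends (setT :\ v) (~: [set x in s]) (c - 2) P).
Proof.
move=> _; split=> [s l P Q c c' _ uniq_sl DRP DRQ nzP nzQ sumP sumQ|s v P c _ _ _ iso].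
  have uniq_s : uniq s by move: uniq_sl; rewrite rcons_uniq => /andP [].
  rewrite (reduction_colours uniq_sl DRQ nzQ sumQ) (reduction_colours uniq_s DRP nzP sumP).
  by rewrite size_rcons.
exact: (signed_sum_remove iso).
Qed.
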